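(* Let $\Gamma$ be a connected, non-complete distance-regular graph with fundamental group $G$ (as defined in the context), let $m,n>1$ be integers, and let $\rho: G\to S_{mn}$ be a transitive permutation representation such that $G\rho$ is imprimitive with $m$ blocks of imprimitivity, each of size $n$. Suppose that the associated cover $\Gamma_\rho$ is a distance-regular antipodal $mn$-cover of $\Gamma$. Let $\sigma: G\to S_m$ be the transitive action of $G\rho$ on its $m$ blocks of imprimitivity. Then $\Gamma_\rho$ is an $n$-cover of the $m$-cover $\Gamma_\sigma$ of $\Gamma$, and $\Gamma_\sigma$ is an antipodal distance-regular $m$-cover of $\Gamma$.
   Context: All graphs are finite, undirected, without loops or multiple edges. A graph $\Gamma$ is viewed as an abstract 2-dimensional simplicial complex whose 0-, 1-, 2-simplices are its vertices, edges and triangles. A cover of $\Gamma$ is a pair $(\tilde\Gamma,\theta)$ with $\tilde\Gamma$ a graph and $\theta:V(\tilde\Gamma)\to V(\Gamma)$ a surjection such that: each fibre $v\theta^{-1}$ is a coclique; the union of two distinct fibres over a non-edge of $\Gamma$ is a coclique; the subgraph induced on two fibres over an edge of $\Gamma$ is a perfect matching; the subgraph induced on three fibres over a triangle of $\Gamma$ is a disjoint union of triangles. It is an $r$-cover if all fibres have size $r$. For non-complete $\Gamma$, an antipodal $r$-cover is a connected $r$-cover $\tilde\Gamma$ in which ''equal or at maximum distance in $\tilde\Gamma$'' is an equivalence relation on $V(\tilde\Gamma)$ whose classes are the fibres. Fundamental group: fix a spanning tree $T$ of the connected graph $\Gamma$. $G$ is the group generated by symbols $g_{v,w}$, one for each ordered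 pair $(v,w)$ with $\{v,w\}$ an edge, subject to the relations $g_{s,t}=1$ for each arc $(s,t)$ of $T$, $g_{v,w}g_{w,v}=1$ for each edge $\{v,w\}$, and $g_{x,y}g_{y,z}g_{z,x}=1$ for each triangle $\{x,y,z\}$ (its isomorphism type does not depend on $T$). For a transitive permutation representation $\rho:G\to S_r$ (acting on $\{1,\dots,r\}$ on the right), the cover $\Gamma_\rho$ has vertex set $V(\Gamma)\times\{1,\dots,r\}$, covering map $(v,i)\mapsto v$, and $(v,i)\sim(w,j)$ iff $\{v,w\}\in E(\Gamma)$ and $j=i\,(g_{v,w}\rho)$; it is a connected $r$-cover of $\Gamma$. If $G\rho$ has blocks $B_1,\dots,B_m$ and $\sigma$ is the action on blocks, then $\Gamma_\rho$ is an $n$-cover of $\Gamma_\sigma$ via $(v,i)\mapsto (v,k)$ where $i\in B_k$. *)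

From HB Require Import structures.
From mathcomp Require Import all_boot all_fingroup.
Set Implicit Arguments. Unset Strict Implicit. Unset Printing Implicit Defensive.

Section Graphs.
Variable T : finType.

Definition simple_graph (e : rel T) := symmetric e /\ irreflexive e.
Definition connected_graph (e : rel T) := forall x y, connect e x y.
Definition complete_graph (e : rel T) := forall x y, x != y -> e x y.

Fixpoint ball (e : rel T) (k : nat) (x : T) : {set T} :=
  if k is k'.+1 then ball e k' x :|: [set y | [exists z in ball e k' x, e z y]]
  else [set x].

(* graph distance (equal to #|T| when y is unreachable from x) *)
Definition dist (e : rel T) (x y : T) : nat :=
  find (fun k => y \in ball e k x) (iota 0 #|T|).

Definition diameter (e : rel T) : nat := \max_(p : T * T) dist e p.1 p.2.

Definition distance_regular (e : rel T) :=
  connected_graph e /\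
  exists c b : nat -> nat, forall x y,
    #|[set z | e y z & dist e x z == (dist e x y).-1]| = c (dist e x y) /\
    #|[set z | e y z & dist e x z == (dist e x y).+1]| = b (dist e x y).

End Graphs.

Section Covers.
Variable T : finType.

Definition is_cover (U : finType) (e : rel T) (eU : rel U) (th : U -> T) :=
  [/\ forall v, exists x, th x = v,
      forall x y, th x = th y -> ~~ eU x y,
      forall x y, th x != th y -> ~~ e (th x) (th y) -> ~~ eU x y,
      forall x w, e (th x) w -> #|[set y | (th y == w) && eU x y]| = 1 &
      forall x y z, e (th x) (th y) -> e (th y) (th z) -> e (th z) (th x) ->
                    eU x y -> eU x z -> eU y z].

Definition is_rcover (U : finType) (e : rel T) (eU : rel U) (th : U -> T) (r : nat) :=
  is_cover e eU th /\ forall v, #|[set x | th x == v]| = r.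

Definition antipodal_cover (U : finType) (e : rel T) (eU : rel U) (th : U -> T) (r : nat) :=
  [/\ ~ complete_graph e, connected_graph eU, is_rcover e eU th r &
      forall x y, (x == y) || (dist eU x y == diameter eU) = (th x == th y)].

(* spanning tree: symmetric connected spanning subgraph with |T|-1 edges *)
Definition spanning_tree (e t : rel T) :=
  [/\ symmetric t, subrel t e, connected_graph t &
      #|[set p : T * T | t p.1 p.2]| = 2 * (#|T|).-1].

(* A permutation representation rho : G -> S_r of the fundamental group G
   (defined w.r.t. the spanning tree t) is given by the images
   pi v w = g_{v,w} rho of the generators, subject to the defining relations.
   MathComp permutations act on the right: (p * q) i = q (p i). *)
Definition fund_rep (r : nat) (e t : rel T) (pi : T -> T -> {perm 'I_r}) :=
  [/\ forall s u, t s u -> pi s u = 1%g,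
      forall v w, e v w -> (pi v w * pi w v = 1)%g &
      forall x y z, e x y -> e y z -> e z x -> (pi x y * pi y z * pi z x = 1)%g].

Definition rep_group (r : nat) (e : rel T) (pi : T -> T -> {perm 'I_r}) :
  {set {perm 'I_r}} :=
  <<[set pi p.1 p.2 | p in [pred p : T * T | e p.1 p.2]]>>%g.

Definition cover_graph (r : nat) (e : rel T) (pi : T -> T -> {perm 'I_r}) :
  rel (T * 'I_r) :=
  fun p q => e p.1 q.1 && (q.2 == pi p.1 q.1 p.2).

End Covers.

From HB Require Import structures.
From mathcomp Require Import all_boot all_fingroup.
From mathcomp Require Import zify.
Set Implicit Arguments. Unset Strict Implicit. Unset Printing Implicit Defensive.

(** The blocks of imprimitivity give a map (v, i) |-> (v, block of i) from the
    cover Gamma_rho onto Gamma_sigma which is a local isomorphism, so Gamma_rho is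
    an n-cover of Gamma_sigma, and each fibre of this map lies in an antipodal class
    of Gamma_rho.  Distances in Gamma_sigma are therefore distances to such fibres.
    In an antipodal distance-regular graph of diameter D, a vertex at distance
    h <= D/2 from one member of an antipodal class is at distance D - h from all
    the others; this pins down, for every vertex y, how many neighbours of y are
    nearer to or farther from a fibre in terms of the distance of y to the fibre
    alone, so Gamma_sigma is distance-regular, with the same diameter D, and its
    fibres over Gamma are its antipodal classes. *)

Section GraphDistance.
Variables (T : finType) (e : rel T).

Lemma ball_mono k l x : k <= l -> ball e k x \subset ball e l x.
Proof.
elim: l => [|l IHl]; first by rewrite leqn0 => /eqP ->.
rewrite leq_eqVlt => /orP[/eqP -> // | /IHl sub_kl].
exact: subset_trans sub_kl (subsetUl _ _).
Qed.

Lemma ball_nbr k x y z : y \in ball e k x -> e y z -> z \in ball e k.+1 x.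
Proof. by move=> yk yz; rewrite /= !inE; apply/orP; right; apply/existsP; exists y; rewrite yk. Qed.

Lemma ballSP k x y :
  y \in ball e k.+1 x -> y \in ball e k x \/ exists2 z, z \in ball e k x & e z y.
Proof. by rewrite /= !inE => /orP[|/existsP[z /andP[zk zy]]]; [left | right; exists z]. Qed.

Lemma ball_nbr_sub k x y : e x y -> ball e k y \subset ball e k.+1 x.
Proof.
move=> xy; elim: k => [|k IHk].
  by apply/subsetP => z; rewrite /= inE => /eqP ->; apply: (@ball_nbr 0 x x); rewrite /= ?inE.
apply/subsetP => z /ballSP[zk | [w wk wz]].
  by apply: (subsetP (ball_mono x (leqnSn _))); apply: (subsetP IHk).
by apply: ball_nbr wz; apply: (subsetP IHk).
Qed.

Lemma path_ball x p : path e x p -> last x p \in ball e (size p) x.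
Proof.
elim/last_ind: p => [|p y IHp]; first by rewrite /= inE.
by rewrite rcons_path last_rcons size_rcons => /andP[/IHp]; apply: ball_nbr.
Qed.

Lemma diameter_max x y : dist e x y <= diameter e.
Proof. exact: (@leq_bigmax _ (fun p : T * T => dist e p.1 p.2) (x, y)). Qed.

Hypothesis e_conn : connected_graph e.

Lemma connect_ball x y : exists2 k, k < #|T| & y \in ball e k x.
Proof.
have /connectP[p xp ->] := e_conn x y.
have [q xq uq _] := shortenP xp; exists (size q); last exact: path_ball.
by have := max_card (mem (x :: q)); rewrite (card_uniqP uq).
Qed.

Lemma dist_ball x y k : (dist e x y <= k) = (y \in ball e k x).
Proof.
set P := fun j => y \in ball e j x.
have hasP : has P (iota 0 #|T|).
  have [j jT jb] := connect_ball x y; apply/hasP; exists j => //; by rewrite mem_iota.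
have dT : dist e x y < #|T| by rewrite /dist -[X in _ < X](size_iota 0) -has_find.
apply/idP/idP => [dk | yk].
  have := nth_find 0 hasP; rewrite -/(dist e x y) nth_iota // add0n => yd.
  exact: (subsetP (ball_mono x dk)).
rewrite leqNgt; apply/negP => kd.
have := before_find 0 kd; rewrite nth_iota ?add0n; last exact: ltn_trans dT.
by rewrite /P yk.
Qed.

Lemma dist0 x : dist e x x = 0.
Proof. by apply/eqP; rewrite -leqn0 dist_ball /= inE. Qed.

Lemma dist_eq0 x y : dist e x y = 0 -> x = y.
Proof.
move=> d0; have : dist e x y <= 0 by rewrite d0.
by rewrite dist_ball /= inE => /eqP. Qed.

Lemma dist_nbr x y z : e y z -> dist e x z <= (dist e x y).+1.
Proof. by move=> yz; rewrite dist_ball; apply: ball_nbr yz; rewrite -dist_ball. Qed.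

Lemma dist_nbr_src x y z : e x y -> dist e x z <= (dist e y z).+1.
Proof.
by move=> xy; rewrite dist_ball; apply: (subsetP (ball_nbr_sub _ xy)); rewrite -dist_ball.
Qed.

Lemma dist_pred x y k : dist e x y = k.+1 -> exists2 z, e z y & dist e x z = k.
Proof.
move=> dxy; have : dist e x y <= k.+1 by rewrite dxy.
rewrite dist_ball => /ballSP[| [z zk zy]]; first by rewrite -dist_ball dxy ltnn.
exists z => //; apply/eqP; rewrite eqn_leq dist_ball zk /= -ltnS -dxy.
exact: dist_nbr.
Qed.

Lemma dist_level x y k : k <= dist e x y -> exists z, dist e x z = k.
Proof.
move dxy: (dist e x y) => d; elim: d y dxy => [|d IHd] y dxy kd.
  by exists y; rewrite dxy; case: k kd.
rewrite leq_eqVlt in kd; case/orP: kd => [/eqP -> | ]; first by exists y.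
by have [z _ dz] := dist_pred dxy; rewrite ltnS; apply: IHd dz.
Qed.

Lemma dist_tri x y z : dist e x z <= dist e x y + dist e y z.
Proof.
move dyz: (dist e y z) => d; elim: d z dyz => [|d IHd] z dyz.
  by rewrite (dist_eq0 dyz) addn0.
have [w wz dw] := dist_pred dyz.
by apply: leq_trans (dist_nbr x wz) _; rewrite addnS ltnS IHd.
Qed.

Lemma diameter_gt1 x y : x != y -> ~~ e x y -> 1 < diameter e.
Proof.
move=> xy nexy; apply: leq_trans (diameter_max x y).
case dxy: (dist e x y) => [|[|d]] //; first by rewrite (dist_eq0 dxy) eqxx in xy.
have [z zy /dist_eq0 xz] := dist_pred dxy.
by rewrite xz zy in nexy.
Qed.

Hypothesis e_sym : symmetric e.

Lemma dist_sym x y : dist e x y = dist e y x.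
Proof.
suff dist_le_sym u v : dist e v u <= dist e u v by apply/eqP; rewrite eqn_leq !dist_le_sym.
move duv: (dist e u v) => d; elim: d v duv => [|d IHd] v duv.
  by rewrite (dist_eq0 duv) dist0.
have [w wv dw] := dist_pred duv.
by apply: leq_trans (dist_nbr_src u (_ : e v w)) _; rewrite 1?e_sym // ltnS IHd.
Qed.

End GraphDistance.

Lemma connect_homo (U W : finType) (eU : rel U) (eW : rel W) (f : U -> W) :
  {homo f : x y / eU x y >-> eW x y} -> forall x y, connect eU x y -> connect eW (f x) (f y).
Proof.
move=> f_homo x y /connectP[p xp ->]; rewrite -last_map.
by apply/connectP; exists (map f p); first exact: homo_path f_homo xp.
Qed.

Lemma card_exists_disjoint (T I : finType) (B : {set I}) (P : I -> pred T) (Q : pred T) :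
  (forall z, {in B &, forall u u', P u z -> P u' z -> u = u'}) ->
  #|[set z | Q z & [exists u in B, P u z]]| = \sum_(u in B) #|[set z | Q z & P u z]|.
Proof.
move=> P_inj; rewrite -sum1_card big_mkcond /=.
under [RHS]eq_bigr => u _ do rewrite -sum1_card big_mkcond /=.
rewrite exchange_big /=; apply: eq_bigr => z _; rewrite inE.
case: (boolP [exists u in B, P u z]) => [/existsP[u0 /andP[u0B Pu0]] | noP].
  rewrite andbT (bigD1 u0) //= inE Pu0 andbT big1 ?addn0 // => u /andP[uB ne].
  rewrite inE; case: (boolP (P u z)) => [Pu | _]; last by rewrite andbF.
  by rewrite (P_inj z u u0) ?eqxx in ne.
rewrite andbF big1 // => u uB; rewrite inE.
case: (boolP (P u z)) => [Pu | _]; last by rewrite andbF.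
by move: noP; rewrite negb_exists => /forallP /(_ u); rewrite uB Pu.
Qed.

Section CoveringMap.
Variables (U W : finType) (eU : rel U) (eW : rel W) (phi : U -> W).
Hypothesis phi_homo : {homo phi : x y / eU x y >-> eW x y}.
Hypothesis phi_lift : forall x w, eW (phi x) w -> exists2 y, eU x y & phi y = w.

Lemma cover_connected :
  (forall w, exists u, phi u = w) -> connected_graph eU -> connected_graph eW.
Proof.
move=> phi_surj eU_conn x' y'.
have [x <-] := phi_surj x'; have [y <-] := phi_surj y'.
exact: connect_homo phi_homo _ _ (eU_conn x y).
Qed.

Lemma ball_cover k x w :
  (w \in ball eW k (phi x)) = [exists y, (phi y == w) && (y \in ball eU k x)].
Proof.
elim: k w => [|k IHk] w.
  rewrite /= inE; apply/eqP/existsP => [-> | [y /andP[/eqP <-]]].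
    by exists x; rewrite /= !inE !eqxx.
  by rewrite inE => /eqP ->.
apply/idP/existsP => [/ballSP[| [w0 w0k w0w]] | [y /andP[/eqP <- /ballSP[yk | [z zk zy]]]]].
- rewrite IHk => /existsP[y /andP[yw yk]]; exists y; rewrite yw /=.
  exact: (subsetP (ball_mono _ _ (leqnSn _))).
- move: w0k; rewrite IHk => /existsP[y0 /andP[/eqP y0w0 y0k]].
  rewrite -y0w0 in w0w; have [y y0y <-] := phi_lift w0w.
  by exists y; rewrite eqxx; apply: ball_nbr y0y.
- apply: (subsetP (ball_mono _ _ (leqnSn _))).
  by rewrite IHk; apply/existsP; exists y; rewrite eqxx.
- apply: (@ball_nbr _ _ _ _ (phi z)); last exact: phi_homo.
  by rewrite IHk; apply/existsP; exists z; rewrite eqxx.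
Qed.

Hypothesis phi_nbr_inj : forall y z z', eU y z -> eU y z' -> phi z = phi z' -> z = z'.

Lemma card_nbr_image y (P : pred W) :
  #|[set z' | eW (phi y) z' & P z']| = #|[set z | eU y z & P (phi z)]|.
Proof.
rewrite -(@card_in_imset _ _ phi (mem [set z | eU y z & P (phi z)])); last first.
  by move=> z z'; rewrite !inE => /andP[yz _] /andP[yz' _]; apply: phi_nbr_inj yz yz'.
apply: eq_card => z'; rewrite inE; apply/andP/imsetP => [[yz' Pz'] | [z]].
  by have [z yz zz'] := phi_lift yz'; exists z; rewrite // inE yz zz'.
by rewrite inE => /andP[yz Pz] ->; rewrite phi_homo.
Qed.

Hypotheses (eU_conn : connected_graph eU) (eW_conn : connected_graph eW).

Lemma cover_dist_le x y : dist eW (phi x) (phi y) <= dist eU x y.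
Proof.
by rewrite dist_ball // ball_cover; apply/existsP; exists y; rewrite eqxx /= -dist_ball.
Qed.

Lemma cover_dist_lift x w : exists2 y, phi y = w & dist eU x y = dist eW (phi x) w.
Proof.
have : dist eW (phi x) w <= dist eW (phi x) w by [].
rewrite dist_ball // ball_cover => /existsP[y /andP[/eqP yw yk]]; exists y => //.
by rewrite -dist_ball // in yk; apply/eqP; rewrite eqn_leq yk -yw cover_dist_le.
Qed.

End CoveringMap.

Section AntipodalDistanceRegular.
Variables (U : finType) (K : eqType) (eU : rel U) (F : U -> K).
Hypotheses (eU_sym : symmetric eU) (eU_conn : connected_graph eU).
Variables cc bb : nat -> nat.
Hypothesis eU_DR : forall x y,
    #|[set z | eU y z & dist eU x z == (dist eU x y).-1]| = cc (dist eU x y) /\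
    #|[set z | eU y z & dist eU x z == (dist eU x y).+1]| = bb (dist eU x y).
Hypothesis eU_anti : forall x y, (x == y) || (dist eU x y == diameter eU) = (F x == F y).

Local Notation D := (diameter eU).
Local Notation d := (dist eU).

Lemma card_nbr_dist_pred u y : #|[set z | eU y z & d u z == (d u y).-1]| = cc (d u y).
Proof. by have [] := eU_DR u y. Qed.

Lemma card_nbr_dist_succ u y : #|[set z | eU y z & d u z == (d u y).+1]| = bb (d u y).
Proof. by have [] := eU_DR u y. Qed.

Lemma antipodal_diameter x y : F x = F y -> x != y -> d x y = D.
Proof. by move=> Fxy xy; have := eU_anti x y; rewrite Fxy eqxx (negbTE xy) => /eqP. Qed.

Lemma diameter_antipodal x y : d x y = D -> F x = F y.
Proof. by move=> dxy; have := eU_anti x y; rewrite dxy eqxx orbT => /esym/eqP. Qed.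

Lemma intersection_b_gt0 i : i < D -> 0 < bb i.
Proof.
move=> iD; have [[p q] /= dpq] : exists pq : U * U, d pq.1 pq.2 = D.
  have [|pq dpq] := @eq_bigmax _ (fun pq : U * U => d pq.1 pq.2); last by exists pq.
  case: (pickP (@predT (U * U))) => [pq _ | noU]; first by apply/card_gt0P; exists pq.
  by move: iD; rewrite /diameter big_pred0.
have iq : i.+1 <= d p q by rewrite dpq.
have [r dr] := dist_level eU_conn iq.
have [z zr dz] := dist_pred eU_conn dr.
rewrite -dz -card_nbr_dist_succ; apply/card_gt0P; exists r.
by rewrite inE zr dz dr eqxx.
Qed.

Lemma walk_away u z : exists2 w, d u w = D & d z w = D - d u z.
Proof.
suff walk a y : d u y + a = D -> exists2 w, d u w = D & d y w <= a.
  have [w uw zw] := walk (D - d u z) z (subnKC (diameter_max _ u z)).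
  exists w => //; apply/eqP; rewrite eqn_leq zw /=.
  by have := dist_tri eU_conn u z w; rewrite uw; lia.
elim: a y => [|a IHa] y uyD.
  by exists y; [rewrite -uyD addn0 | rewrite dist0].
have /card_gt0P[y' y'S] : 0 < #|[set z | eU y z & d u z == (d u y).+1]|.
  by rewrite card_nbr_dist_succ intersection_b_gt0 //; lia.
move: y'S; rewrite inE => /andP[yy' /eqP uy'].
have [w uw y'w] : exists2 w, d u w = D & d y' w <= a by apply: IHa; rewrite uy'; lia.
by exists w => //; apply: leq_trans (dist_nbr_src eU_conn w yy') _.
Qed.

Lemma antipodal_dist u0 u z :
  F u0 = F u -> u0 != u -> 2 * d u0 z <= D -> d u z = D - d u0 z.
Proof.
move=> Fu0u u0u hz; have u0uD := antipodal_diameter Fu0u u0u.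
have lo : D <= d u0 z + d u z.
  by rewrite -u0uD -(dist_sym eU_conn eU_sym z u); apply: dist_tri.
have [w uw zw] := walk_away u z.
have Fu0w : F u0 = F w by rewrite Fu0u; apply: diameter_antipodal.
have := diameter_max eU u z; case: (eqVneq u0 w) => [u0w | u0w].
  by rewrite -u0w (dist_sym eU_conn eU_sym) in zw; lia.
by have := dist_tri eU_conn u0 z w; rewrite (antipodal_diameter Fu0w u0w) zw; lia.
Qed.

(* Intersection numbers c_h and b_h of the quotient of [eU] whose vertices are sets
   of [r] antipodal vertices. *)
Definition quotient_c (r h : nat) :=
  if 2 * h < D then cc h else if 2 * h <= D.+1 then r * cc h else bb (D - h).

Definition quotient_b (r h : nat) :=
  if 2 * h.+1 <= D then bb h else if 2 * h <= D then bb h - r.-1 * cc (D - h)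
  else cc (D - h).

(* [mu] is the distance to a set [B] of antipodal vertices; when [B] is a fibre of
   a covering map, [mu] is the distance to its image in the quotient graph. *)
Section DistanceToAntipodalSet.
Hypothesis eU_irr : irreflexive eU.
Hypothesis D_gt1 : 1 < D.
Variables (B : {set U}) (mu : U -> nat).
Hypothesis B_class : {in B &, forall u u', F u = F u'}.
Hypothesis mu_le : forall u z, u \in B -> mu z <= d u z.
Hypothesis mu_attained : forall z, exists2 u, u \in B & d u z = mu z.

Lemma mu_leD z : mu z <= D.
Proof. by have [u _ <-] := mu_attained z; apply: diameter_max. Qed.

Lemma mu_nbr y z : eU y z -> mu z <= (mu y).+1.
Proof.
move=> yz; have [u uB <-] := mu_attained y.
exact: leq_trans (mu_le z uB) (dist_nbr eU_conn u yz).
Qed.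

Lemma mu_near u0 z : u0 \in B -> 2 * d u0 z <= D -> mu z = d u0 z.
Proof.
move=> u0B hz; have [u uB uz] := mu_attained z.
apply/eqP; rewrite eqn_leq mu_le //= -uz.
case: (eqVneq u0 u) => [<- // | u0u].
by rewrite (antipodal_dist (B_class u0B uB) u0u hz); lia.
Qed.

Lemma mu_antipode us z : (forall u, u \in B -> F us = F u /\ us != u) ->
  2 * d us z <= D -> mu z = D - d us z.
Proof.
move=> usB hz; have [u uB <-] := mu_attained z.
by have [Fu usu] := usB u uB; apply: antipodal_dist.
Qed.

Lemma dist_B_inj u u' z : u \in B -> u' \in B -> d u z = d u' z -> 2 * d u z < D -> u = u'.
Proof.
move=> uB u'B uu' hz; case: (eqVneq u u') => // ne; exfalso.
by have := antipodal_dist (B_class uB u'B) ne (ltnW hz); rewrite -uu'; lia.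
Qed.

Lemma exists_antipode_far y : D < 2 * mu y ->
  exists2 us, d us y = D - mu y & forall u, u \in B -> F us = F u /\ us != u.
Proof.
move=> hy; have [u0 u0B u0y] := mu_attained y.
have [us u0us yus] := walk_away u0 y.
exists us; first by rewrite (dist_sym eU_conn eU_sym) yus u0y.
move=> u uB; split; first by rewrite -(B_class u0B uB); apply/esym/diameter_antipodal.
apply/eqP => usu; have := mu_le y uB.
by rewrite -usu (dist_sym eU_conn eU_sym) yus u0y; lia.
Qed.

Lemma dist_B_near y u0 u : u0 \in B -> d u0 y = mu y -> 2 * mu y <= D ->
  u \in B -> u != u0 -> d u y = D - mu y.
Proof.
move=> u0B u0y hy uB uu0; rewrite -u0y; apply: antipodal_dist; first exact: B_class.
  by rewrite eq_sym.
by rewrite u0y.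
Qed.

Lemma dist_B_far y u : D < 2 * mu y -> u \in B -> d u y = mu y.
Proof.
move=> hy uB; have [us usy usB] := exists_antipode_far hy; have [Fusu usu] := usB u uB.
have := mu_leD y; rewrite (antipodal_dist Fusu usu) usy; lia.
Qed.

Variables (y u0 : U).
Hypotheses (u0B : u0 \in B) (u0y : d u0 y = mu y).

Lemma card_mu_pred_near : 2 * mu y < D ->
  #|[set z | eU y z & mu z == (mu y).-1]| = cc (mu y).
Proof.
move=> hy; rewrite -{2}u0y -card_nbr_dist_pred; apply: eq_card => z.
rewrite !inE u0y; case yz: (eU y z) => //=; apply/eqP/eqP => [mz | u0z].
- have [u uB uz] := mu_attained z.
  case: (eqVneq u u0) => [<- | uu0]; first by rewrite uz mz.
  exfalso.
  have huz : 2 * d u z <= D by rewrite uz mz; lia.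
  have := antipodal_dist (B_class uB u0B) uu0 huz.
  by have := dist_nbr eU_conn u0 yz; rewrite uz mz u0y; lia.
- by rewrite (mu_near u0B) ?u0z //; lia.
Qed.

Lemma card_mu_pred_mid : D <= 2 * mu y <= D.+1 ->
  #|[set z | eU y z & mu z == (mu y).-1]| = #|B| * cc (mu y).
Proof.
move=> /andP[lo hi].
have dB u : u \in B -> d u y = mu y.
  move=> uB; case: (eqVneq u u0) => [-> // | uu0].
  have [hD | hD] := leqP (2 * mu y) D; last exact: dist_B_far.
  by rewrite (dist_B_near u0B u0y hD uB uu0); lia.
have -> : [set z | eU y z & mu z == (mu y).-1] =
          [set z | eU y z & [exists u in B, d u z == (mu y).-1]].
  apply/setP => z; rewrite !inE; case yz: (eU y z) => //=.
  apply/eqP/existsP => [mz | [u /andP[uB /eqP uz]]].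
    by have [u uB uz] := mu_attained z; exists u; rewrite uB uz mz eqxx.
  have zy : eU z y by rewrite eU_sym.
  by have := mu_nbr zy; have := mu_le z uB; rewrite uz; lia.
rewrite card_exists_disjoint; last first.
  move=> z u u' uB u'B /eqP uz /eqP u'z.
  by apply: (dist_B_inj (z := z) uB u'B); rewrite uz ?u'z //; lia.
rewrite -sum_nat_const; apply: eq_bigr => u uB.
by rewrite -(dB u uB) card_nbr_dist_pred.
Qed.

Lemma card_mu_pred_far : D.+2 <= 2 * mu y ->
  #|[set z | eU y z & mu z == (mu y).-1]| = bb (D - mu y).
Proof.
move=> hy; have [us usy usB] := exists_antipode_far (ltnW hy).
have := mu_leD y => yD.
rewrite -usy -card_nbr_dist_succ usy; apply: eq_card => z.
rewrite !inE; case yz: (eU y z) => //=; apply/eqP/eqP => [mz | usz].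
- have := dist_nbr eU_conn us yz; rewrite usy => hi.
  case: (leqP (d us z) (D - mu y)) => lo; last by lia.
  have husz : 2 * d us z <= D by lia.
  by have := mu_antipode usB husz; rewrite mz; lia.
- by rewrite (mu_antipode usB) usz //; lia.
Qed.

Lemma card_mu_succ_near : 2 * (mu y).+1 <= D ->
  #|[set z | eU y z & mu z == (mu y).+1]| = bb (mu y).
Proof.
move=> hy; rewrite -{2}u0y -card_nbr_dist_succ; apply: eq_card => z.
rewrite !inE u0y; case yz: (eU y z) => //=; apply/eqP/eqP => [mz | u0z].
- have := mu_le z u0B; have := dist_nbr eU_conn u0 yz; rewrite mz u0y; lia.
- by rewrite (mu_near u0B) u0z.
Qed.

Lemma nbr_mu_succ_mid : 2 * mu y <= D <= (2 * mu y).+1 ->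
  [set z | eU y z & mu z == (mu y).+1] =
  [set z | eU y z & d u0 z == (d u0 y).+1]
    :\: [set z | eU y z & [exists u in B :\ u0, d u z == (D - mu y).-1]].
Proof.
move=> /andP[lo hi]; apply/setP => z; rewrite !inE u0y; case yz: (eU y z) => //=.
apply/eqP/andP => [mz | [nX /eqP u0z]].
- have u0z : d u0 z = (mu y).+1.
    by have := mu_le z u0B; have := dist_nbr eU_conn u0 yz; rewrite mz u0y; lia.
  split; last by rewrite u0z.
  apply/negP => /existsP[u /andP[/setD1P[_ uB] /eqP uz]].
  by have := mu_le z uB; rewrite uz mz; lia.
- have [u uB <-] := mu_attained z.
  case: (eqVneq u u0) => [-> // | uu0].
  have [w u0w zw] := walk_away u0 z.
  rewrite u0z (dist_sym eU_conn eU_sym) in zw.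
  have Fu0w := diameter_antipodal u0w.
  case: (eqVneq w u) => [wu | wu].
    case/negP: nX; apply/existsP; exists u.
    by rewrite !inE uu0 uB /= -wu zw; apply/eqP; lia.
  have Fwu : F w = F u by rewrite -Fu0w; apply: B_class.
  have hwz : 2 * d w z <= D by rewrite zw; lia.
  by rewrite (antipodal_dist Fwu wu hwz) zw; lia.
Qed.

Lemma card_mu_succ_mid : 2 * mu y <= D <= (2 * mu y).+1 ->
  #|[set z | eU y z & mu z == (mu y).+1]| = bb (mu y) - #|B|.-1 * cc (D - mu y).
Proof.
move=> hy; rewrite nbr_mu_succ_mid //; move/andP: hy => [lo hi].
set A := [set z | eU y z & d u0 z == (d u0 y).+1].
set X := [set z | eU y z & [exists u in B :\ u0, d u z == (D - mu y).-1]].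
have XA : X \subset A.
  apply/subsetP => z; rewrite !inE => /andP[-> /existsP[u /andP[/setD1P[uu0 uB] /eqP uz]]].
  have huz : 2 * d u z <= D by rewrite uz; lia.
  by rewrite (antipodal_dist (B_class uB u0B) uu0 huz) uz u0y; apply/eqP; lia.
rewrite cardsD (setIidPr XA) /A card_nbr_dist_succ u0y /X; congr (_ - _).
rewrite card_exists_disjoint; last first.
  move=> z u u' /setD1P[_ uB] /setD1P[_ u'B] /eqP uz /eqP u'z.
  by apply: (dist_B_inj (z := z) uB u'B); rewrite uz ?u'z //; lia.
rewrite (cardsD1 u0 B) u0B add1n /= -sum_nat_const.
apply: eq_bigr => u /setD1P[uu0 uB].
by rewrite -(dist_B_near u0B u0y lo uB uu0) card_nbr_dist_pred.
Qed.

Lemma card_mu_succ_far : D < 2 * mu y ->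
  #|[set z | eU y z & mu z == (mu y).+1]| = cc (D - mu y).
Proof.
move=> hy; have [us usy usB] := exists_antipode_far hy.
have [Fusu0 usu0] := usB u0 u0B.
have := mu_leD y => yD.
rewrite -usy -card_nbr_dist_pred usy; apply: eq_card => z.
rewrite !inE; case yz: (eU y z) => //=; apply/eqP/eqP => [mz | usz].
- have u0z : d u0 z = (mu y).+1.
    by have := mu_le z u0B; have := dist_nbr eU_conn u0 yz; rewrite mz u0y; lia.
  have [w u0w zw] := walk_away u0 z.
  rewrite u0z (dist_sym eU_conn eU_sym) in zw.
  have Fusw : F us = F w by rewrite Fusu0; apply: diameter_antipodal.
  case: (eqVneq w us) => [<- | wus]; first by rewrite zw; lia.
  have hwz : 2 * d w z <= D by rewrite zw; lia.
  have := antipodal_dist (esym Fusw) wus hwz; rewrite zw => usz.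
  by have := dist_nbr eU_conn us yz; have := mu_leD z; rewrite usz usy mz; lia.
- have yD' : mu y < D.
    rewrite ltn_neqAle yD andbT; apply/eqP => yD'.
    move: usy usz; rewrite yD' subnn => /(dist_eq0 eU_conn) usy' /(dist_eq0 eU_conn) usz'.
    by rewrite -usy' usz' eU_irr in yz.
  by rewrite (mu_antipode usB) usz //; lia.
Qed.

Lemma card_mu_pred : #|[set z | eU y z & mu z == (mu y).-1]| = quotient_c #|B| (mu y).
Proof.
rewrite /quotient_c; have [lt | ge] := ltnP (2 * mu y) D; first exact: card_mu_pred_near.
have [le | gt] := leqP (2 * mu y) D.+1; last exact: card_mu_pred_far.
by apply: card_mu_pred_mid; rewrite ge le.
Qed.

Lemma card_mu_succ : #|[set z | eU y z & mu z == (mu y).+1]| = quotient_b #|B| (mu y).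
Proof.
rewrite /quotient_b; have [le | gt] := leqP (2 * (mu y).+1) D; first exact: card_mu_succ_near.
have [le' | gt'] := leqP (2 * mu y) D; last exact: card_mu_succ_far.
by apply: card_mu_succ_mid; rewrite le' /=; lia.
Qed.

End DistanceToAntipodalSet.
End AntipodalDistanceRegular.

Section QuotientOfAntipodalCover.
Variables (U W : finType) (K : eqType) (eU : rel U) (eW : rel W) (phi : U -> W).
Variables (F : U -> K) (FW : W -> K).
Hypotheses (eU_sym : symmetric eU) (eW_sym : symmetric eW) (eU_irr : irreflexive eU).
Hypotheses (eU_conn : connected_graph eU) (eW_conn : connected_graph eW).
Hypothesis phi_homo : {homo phi : x y / eU x y >-> eW x y}.
Hypothesis phi_lift : forall x w, eW (phi x) w -> exists2 y, eU x y & phi y = w.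
Hypothesis phi_nbr_inj : forall y z z', eU y z -> eU y z' -> phi z = phi z' -> z = z'.
Hypothesis phi_surj : forall w, exists u, phi u = w.
Hypothesis FW_phi : forall u, FW (phi u) = F u.
Variables cc bb : nat -> nat.
Hypothesis eU_DR : forall x y,
    #|[set z | eU y z & dist eU x z == (dist eU x y).-1]| = cc (dist eU x y) /\
    #|[set z | eU y z & dist eU x z == (dist eU x y).+1]| = bb (dist eU x y).
Hypothesis eU_anti : forall x y, (x == y) || (dist eU x y == diameter eU) = (F x == F y).

Local Notation D := (diameter eU).

Lemma quotient_dist_lift x' y : exists2 u, phi u = x' & dist eU u y = dist eW x' (phi y).
Proof.
have [u ux' yu] := cover_dist_lift phi_homo phi_lift eU_conn eW_conn y x'.
by exists u; rewrite // (dist_sym eU_conn eU_sym) yu (dist_sym eW_conn eW_sym).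
Qed.

Lemma quotient_distance_regular r : 1 < D ->
  (forall w, #|[set u | phi u == w]| = r) -> distance_regular eW.
Proof.
move=> D_gt1 card_fibre; split => //.
exists (quotient_c eU cc bb r), (quotient_b eU cc bb r) => x' y'.
have [y <-] := phi_surj y'.
pose B := [set u | phi u == x'].
have B_class : {in B &, forall u u', F u = F u'}.
  by move=> u u'; rewrite !inE => /eqP uB /eqP u'B; rewrite -!FW_phi uB u'B.
have mu_le u z : u \in B -> dist eW x' (phi z) <= dist eU u z.
  by rewrite inE => /eqP <-; apply: (cover_dist_le phi_homo phi_lift).
have mu_attained z : exists2 u, u \in B & dist eU u z = dist eW x' (phi z).
  by have [u ux' uz] := quotient_dist_lift x' z; exists u; rewrite ?inE ?ux'.
have [u0 u0B u0y] := mu_attained y.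
rewrite !(card_nbr_image phi_homo phi_lift phi_nbr_inj) -(card_fibre x').
split.
  exact: (card_mu_pred eU_sym eU_conn eU_DR eU_anti D_gt1 B_class mu_le mu_attained u0B u0y).
exact: (card_mu_succ eU_sym eU_conn eU_DR eU_anti eU_irr D_gt1 B_class mu_le mu_attained u0B u0y).
Qed.

Lemma quotient_dist_le_diameter x' y' : dist eW x' y' <= D.
Proof.
have [y <-] := phi_surj y'; have [u _ <-] := quotient_dist_lift x' y.
exact: diameter_max.
Qed.

Lemma quotient_dist_diameter x' y' : x' != y' -> (dist eW x' y' == D) = (FW x' == FW y').
Proof.
have [y <-] := phi_surj y'; have [u <- uy] := quotient_dist_lift x' y => uy'.
rewrite -uy !FW_phi; apply/eqP/eqP => [/(diameter_antipodal eU_anti) // | Fuy].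
by apply: (antipodal_diameter eU_anti) => //; apply: contraNneq uy' => ->.
Qed.

Hypothesis FW_nontrivial : exists x' y', x' != y' /\ FW x' = FW y'.

Lemma quotient_diameter : diameter eW = D.
Proof.
apply/eqP; rewrite eqn_leq; apply/andP; split.
  by apply/bigmax_leqP => p _; apply: quotient_dist_le_diameter.
have [x' [y' [x'y' Fx'y']]] := FW_nontrivial.
have /eqP <- : dist eW x' y' == D by rewrite quotient_dist_diameter // Fx'y'.
exact: diameter_max.
Qed.

Lemma quotient_antipodal x' y' :
  (x' == y') || (dist eW x' y' == diameter eW) = (FW x' == FW y').
Proof.
rewrite quotient_diameter; case: (eqVneq x' y') => [-> | x'y']; first by rewrite !eqxx.
exact: quotient_dist_diameter.
Qed.

End QuotientOfAntipodalCover.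

Lemma not_complete_graph (T : finType) (e : rel T) :
  ~ complete_graph e -> exists x y, x != y /\ ~~ e x y.
Proof.
move=> ncomp; have : ~~ [forall x, forall y, (x != y) ==> e x y].
  by apply/forallP => all_e; apply: ncomp => x y xy; move/forallP/(_ y): (all_e x); rewrite xy.
rewrite negb_forall => /existsP[x]; rewrite negb_forall => /existsP[y].
by rewrite negb_imply => /andP[xy nexy]; exists x, y.
Qed.

Lemma intertwined_perm1 (A B : finType) (b : A -> B) (p : {perm A}) (q : {perm B}) :
  (forall k, exists i, b i = k) -> (forall i, b (p i) = q (b i)) -> p = 1%g -> q = 1%g.
Proof.
move=> b_surj bpq p1; apply/permP => k; have [i <-] := b_surj k.
by rewrite perm1 -bpq p1 perm1.
Qed.

Section PermutationCover.
Variables (V : finType) (e t : rel V) (r : nat) (pi : V -> V -> {perm 'I_r}).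
Hypotheses (e_simple : simple_graph e) (pi_rep : fund_rep e t pi).

Lemma fund_rep_inv v w i : e v w -> pi w v (pi v w i) = i.
Proof. by case: pi_rep => _ pi_inv _ vw; rewrite -permM pi_inv // perm1. Qed.

Lemma fund_rep_tri x y z i : e x y -> e y z -> e z x -> pi y z (pi x y i) = pi x z i.
Proof.
move=> xy yz zx; have cyc : pi z x (pi y z (pi x y i)) = i.
  by case: pi_rep => _ _ pi_tri; move/permP/(_ i): (pi_tri x y z xy yz zx); rewrite !permM perm1.
by rewrite -{2}cyc fund_rep_inv.
Qed.

Lemma cover_graph_sym : symmetric (cover_graph e pi).
Proof.
have [e_sym _] := e_simple; move=> [v i] [w j]; rewrite /cover_graph /= e_sym.
case: (boolP (e w v)) => //= wv; have vw : e v w by rewrite e_sym.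
by apply/eqP/eqP => ->; rewrite fund_rep_inv.
Qed.

Lemma cover_graph_irr : irreflexive (cover_graph e pi).
Proof. by have [_ e_irr] := e_simple; move=> [v i]; rewrite /cover_graph /= e_irr. Qed.

Lemma cover_graph_rcover : 0 < r -> is_rcover e (cover_graph e pi) fst r.
Proof.
move=> r_gt0; have [_ e_irr] := e_simple; split.
  split.
  - by move=> v; exists (v, Ordinal r_gt0).
  - by move=> [v i] [w j] /= ->; rewrite /cover_graph /= e_irr.
  - by move=> [v i] [w j] /= _ nvw; rewrite /cover_graph /= (negbTE nvw).
  - move=> [v i] w /= vw; rewrite -(cards1 (w, pi v w i)); apply: eq_card => -[w' j].
    rewrite !inE /cover_graph /=; apply/andP/eqP => [[/eqP -> /andP[_ /eqP ->]] // | [-> ->]].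
    by rewrite eqxx vw eqxx.
  - move=> [v i] [w j] [u l]; rewrite /cover_graph /=.
    move=> vw wu uv /andP[_ /eqP ->] /andP[_ /eqP ->].
    by rewrite wu fund_rep_tri ?eqxx.
move=> v; transitivity #|[set (v, i) | i : 'I_r]|; last first.
  by rewrite card_imset ?card_ord // => i j [].
apply: eq_card => -[w i]; rewrite !inE.
by apply/eqP/imsetP => [/= -> | [j _ [-> _]]] //; exists i.
Qed.

End PermutationCover.

Section BlockQuotient.
Variables (V : finType) (e t : rel V) (r s : nat).
Variables (pi : V -> V -> {perm 'I_r}) (sigma : V -> V -> {perm 'I_s}) (b : 'I_r -> 'I_s).
Hypotheses (e_simple : simple_graph e) (pi_rep : fund_rep e t pi) (t_sub : subrel t e).
Hypothesis b_surj : forall k, exists i, b i = k.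
Hypothesis b_compat : forall v w i, e v w -> b (pi v w i) = sigma v w (b i).

Local Notation phi := (fun p : V * 'I_r => (p.1, b p.2)).

Lemma fund_rep_blocks : fund_rep e t sigma.
Proof.
have [e_sym _] := e_simple; case: pi_rep => pi_tree pi_inv pi_tri; split.
- move=> v w vw; apply: (intertwined_perm1 b_surj _ (pi_tree v w vw)).
  by move=> i; rewrite b_compat // t_sub.
- move=> v w vw; apply: (intertwined_perm1 b_surj _ (pi_inv v w vw)).
  by move=> i; rewrite !permM !b_compat // e_sym.
- move=> x y z xy yz zx; apply: (intertwined_perm1 b_surj _ (pi_tri x y z xy yz zx)).
  by move=> i; rewrite !permM !b_compat.
Qed.

Lemma block_homo : {homo phi : x y / cover_graph e pi x y >-> cover_graph e sigma x y}.
Proof.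
move=> [v i] [w j]; rewrite /cover_graph /= => /andP[vw /eqP ->].
by rewrite vw /= b_compat // eqxx.
Qed.

Lemma block_lift x w : cover_graph e sigma (phi x) w ->
  exists2 y, cover_graph e pi x y & phi y = w.
Proof.
case: x w => [v i] [w k]; rewrite /cover_graph /= => /andP[vw /eqP ->].
by exists (w, pi v w i); rewrite /cover_graph /= ?vw ?eqxx ?b_compat.
Qed.

Lemma block_nbr_inj y z z' :
  cover_graph e pi y z -> cover_graph e pi y z' -> phi z = phi z' -> z = z'.
Proof.
case: y z z' => [v i] [w j] [w' j']; rewrite /cover_graph /=.
by move=> /andP[_ /eqP ->] /andP[_ /eqP ->] [->].
Qed.

Lemma block_surj w : exists u, phi u = w.
Proof. by case: w => v k; have [i <-] := b_surj k; exists (v, i). Qed.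

Lemma block_rcover n : (forall k, #|[set i | b i == k]| = n) ->
  is_rcover (cover_graph e sigma) (cover_graph e pi) phi n.
Proof.
move=> b_fibre; have [_ e_irr] := e_simple; split.
  split.
  - exact: block_surj.
  - by move=> [v i] [w j] [-> _]; rewrite /cover_graph /= e_irr.
  - by move=> x y _; apply: contra; apply: block_homo.
  - move=> x w xw; have [y xy <-] := block_lift xw.
    rewrite -(cards1 y); apply: eq_card => z; rewrite !inE.
    apply/andP/eqP => [[/eqP yz xz] | ->]; last by rewrite eqxx xy.
    exact: block_nbr_inj xz xy yz.
  - move=> [v i] [w j] [u l]; rewrite /cover_graph /=.
    move=> /andP[vw _] /andP[wu _] /andP[uv _] /andP[_ /eqP ->] /andP[_ /eqP ->].
    by rewrite wu (fund_rep_tri pi_rep) ?eqxx.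
move=> [v k]; rewrite -(b_fibre k).
transitivity #|[set (v, i) | i in [set i | b i == k]]|; last by rewrite card_imset // => i j [].
apply: eq_card => -[w i]; rewrite !inE; apply/eqP/imsetP => [[-> <-] | [j]].
  by exists i; rewrite ?inE.
by rewrite inE => /eqP <- [-> ->].
Qed.

End BlockQuotient.

Theorem theorem3p1 (V : finType) (e t : rel V) (m n : nat)
  (pi : V -> V -> {perm 'I_(m * n)}) (b : 'I_(m * n) -> 'I_m)
  (sigma : V -> V -> {perm 'I_m}) :
  simple_graph e -> connected_graph e -> ~ complete_graph e ->
  distance_regular e ->
  spanning_tree e t -> fund_rep e t pi ->
  [transitive rep_group e pi, on [set: 'I_(m * n)] | 'P] ->
  1 < m -> 1 < n ->
  (forall k, #|[set i | b i == k]| = n) ->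
  (forall v w i, e v w -> b (pi v w i) = sigma v w (b i)) ->
  distance_regular (cover_graph e pi) ->
  antipodal_cover e (cover_graph e pi) fst (m * n) ->
  is_rcover (cover_graph e sigma) (cover_graph e pi) (fun p => (p.1, b p.2)) n /\
  distance_regular (cover_graph e sigma) /\
  antipodal_cover e (cover_graph e sigma) fst m.
Proof.
move=> e_simple _ e_ncomp _ [_ t_sub _ _] pi_rep _ m_gt1 n_gt1 b_fibre b_compat
  [_ [cc [bb U_DR]]] [_ U_conn _ U_anti].
have m_gt0 := ltnW m_gt1.
have b_surj k : exists i, b i = k.
  have /card_gt0P[i] : 0 < #|[set i | b i == k]| by rewrite b_fibre ltnW.
  by rewrite inE => /eqP; exists i.
have sigma_rep := fund_rep_blocks e_simple pi_rep t_sub b_surj b_compat.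
have block_cover := block_rcover e_simple pi_rep b_surj b_compat b_fibre.
have U_sym := cover_graph_sym e_simple pi_rep.
have W_sym := cover_graph_sym e_simple sigma_rep.
have W_conn := cover_connected (block_homo b_compat) (block_surj b_surj) U_conn.
have [v [w [vw nvw]]] := not_complete_graph e_ncomp.
have [i0 _] := b_surj (Ordinal m_gt0).
have D_gt1 : 1 < diameter (cover_graph e pi).
  apply: (diameter_gt1 U_conn (x := (v, i0)) (y := (w, i0))).
    by rewrite xpair_eqE negb_and vw.
  by rewrite /cover_graph /= (negbTE nvw).
have W_antipodal : exists x' y' : V * 'I_m, x' != y' /\ x'.1 = y'.1.
  by exists (v, Ordinal m_gt0), (v, Ordinal m_gt1); rewrite xpair_eqE negb_and eqxx.
split=> //; split.
  exact: (quotient_distance_regular U_sym W_sym (cover_graph_irr pi e_simple) U_conn W_conn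
    (block_homo b_compat) (block_lift b_compat) (block_nbr_inj (pi := pi) (b := b)) (block_surj b_surj)
    (F := fst) (FW := fst) (fun u => erefl) U_DR U_anti D_gt1 block_cover.2).
split => //; first exact: (cover_graph_rcover e_simple sigma_rep m_gt0).
exact: (quotient_antipodal U_sym W_sym U_conn W_conn (block_homo b_compat) (block_lift b_compat)
  (block_surj b_surj) (F := fst) (FW := fst) (fun u => erefl) U_anti W_antipodal).
Qed.
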